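(* Let $\mathcal N=\mathcal N(x)$ be a nowhere vanishing function on $S$ (lifted to $T^*S$). Then $\mathcal N$ is a conformal factor for the almost symplectic form $\Omega+\sigma+\rho^*\mathbf f$ on $T^*S$ (i.e. $d(\mathcal N(\Omega+\sigma+\rho^*\mathbf f))=0$) if and only if $\mathcal N$ is a conformal factor for the almost symplectic form $\Omega+\sigma$ (i.e. $d(\mathcal N(\Omega+\sigma))=0$) and the two-form $\mathbf f^*=\mathcal N\mathbf f$ on $S$ is closed.
   Context: Setting: $S$ ($\dim S=n$) is the base of a gyroscopic $G$–Chaplygin system: $G$ acts freely on $Q$, $\pi\colon Q\to S=Q/G$, $L=\frac12\mathbf G(\dot q,\dot q)-V$ with $G$-invariant $\mathbf G,V$, $\mathbf F$ a $G$-invariant two-form on $Q$, $\mathcal D$ a $G$-invariant distribution complementary to $\ker d\pi$. Reduced data on $S$: metric $\mathbf g(X,Y)=\mathbf G(X^h,Y^h)$, two-form $\mathbf f(X,Y)=\mathbf F(X^h,Y^h)$ ($X^h\in\mathcal D$ horizontal lift), $\Sigma(X,Y,Z)=\mathbf G(X^h,B(Y^h,Z^h))$ where $B(X,Y)=-A([X^h,Y^h])$ is the curvature of $\mathcal D$, and the skew $(1,2)$-tensor $\mathbf C$ with $\Sigma(X,Y,Z)=\mathbf g(X,\mathbf C(Y,Z))$, locally $\mathbf C(\partial_i,\partial_j)=\sum_kC^k_{ij}\partial_k$. On $T^*S$ with canonical coordinates $(x,p)$: $\Omega=\sum_idp_i\wedge dx_i$, $\sigma=\sum_{1\le i<j\le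 n}\sum_kC^k_{ij}(x)p_k\,dx_i\wedge dx_j$, and $\rho\colon T^*S\to S$ is the projection. An almost symplectic form is a nondegenerate (not necessarily closed) two-form. *)

From HB Require Import structures.
From mathcomp Require Import all_boot all_order all_algebra.
From mathcomp Require Import all_classical all_reals all_analysis.
Set Implicit Arguments. Unset Strict Implicit. Unset Printing Implicit Defensive.
Import Order.TTheory GRing.Theory Num.Theory.
Import numFieldNormedType.Exports.
Local Open Scope classical_set_scope.
Local Open Scope ring_scope.

Section Defs.
Variable R : realType.

Fixpoint iterD (m : nat) (vs : seq 'rV[R]_m) (f : 'rV[R]_m -> R) : 'rV[R]_m -> R :=
  match vs with
  | [::] => f
  | v :: vs' => fun x => 'D_v (iterD vs' f) x
  end.

Definition smooth_on (m : nat) (U : set 'rV[R]_m) (f : 'rV[R]_m -> R) : Prop :=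
  forall (vs : seq 'rV[R]_m) (x : 'rV[R]_m), U x -> differentiable (iterD vs f) x.

Definition partial (m : nat) (f : 'rV[R]_m -> R) (a : 'I_m) (x : 'rV[R]_m) : R :=
  'D_(delta_mx 0 a) f x.

(* A two-form on an open set of R^m is given by its components
   om a b = om(d/dy_a, d/dy_b), i.e. om = sum_{a<b} om a b dy_a /\ dy_b. *)
Definition form2 (m : nat) := 'I_m -> 'I_m -> 'rV[R]_m -> R.

Definition d2 (m : nat) (om : form2 m) (a b c : 'I_m) (x : 'rV[R]_m) : R :=
  partial (om b c) a x + partial (om c a) b x + partial (om a b) c x.

Definition closed2 (m : nat) (W : set 'rV[R]_m) (om : form2 m) : Prop :=
  forall x, W x -> forall a b c, d2 om a b c x = 0.

Definition add2 (m : nat) (om1 om2 : form2 m) : form2 m :=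
  fun a b x => om1 a b x + om2 a b x.

Definition scale2 (m : nat) (N : 'rV[R]_m -> R) (om : form2 m) : form2 m :=
  fun a b x => N x * om a b x.

(* T^*U with canonical coordinates y = (x, p) in R^(n+n): x = lsubmx y, p = rsubmx y *)
Definition xpart (n : nat) (y : 'rV[R]_(n + n)) : 'rV[R]_n := lsubmx y.
Definition ppart (n : nat) (y : 'rV[R]_(n + n)) : 'rV[R]_n := rsubmx y.

(* Omega = sum_i dp_i /\ dx_i *)
Definition Omega (n : nat) : form2 (n + n) :=
  fun a b _ => match fintype.split a, fintype.split b with
             | inr i, inl j => (i == j)%:R
             | inl i, inr j => - (i == j)%:R
             | _, _ => 0
             end.

(* sigma = sum_{i<j} sum_k C^k_{ij}(x) p_k dx_i /\ dx_j, with C k i j = C^k_{ij} skew in i,j *)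
Definition sigma (n : nat) (C : 'I_n -> 'I_n -> 'I_n -> 'rV[R]_n -> R) : form2 (n + n) :=
  fun a b y => match fintype.split a, fintype.split b with
             | inl i, inl j => \sum_(k < n) C k i j (xpart y) * ppart y 0 k
             | _, _ => 0
             end.

(* pullback rho^* f of a two-form f on U (f i j = f(d/dx_i, d/dx_j)) *)
Definition pullback (n : nat) (f : form2 n) : form2 (n + n) :=
  fun a b y => match fintype.split a, fintype.split b with
             | inl i, inl j => f i j (xpart y)
             | _, _ => 0
             end.

Definition liftS (n : nat) (N : 'rV[R]_n -> R) : 'rV[R]_(n + n) -> R :=
  fun y => N (xpart y).

Definition conformal_factor (m : nat) (W : set 'rV[R]_m) (N : 'rV[R]_m -> R)
  (om : form2 m) : Prop := closed2 W (scale2 N om).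

End Defs.

From HB Require Import structures.
From mathcomp Require Import all_boot all_order all_algebra.
From mathcomp Require Import all_classical all_reals all_analysis.
From mathcomp Require Import ring.
Import Order.TTheory GRing.Theory Num.Theory.
Import numFieldNormedType.Exports.
Local Open Scope classical_set_scope.
Local Open Scope ring_scope.

(* Since N depends on x only, N rho^* f is the pullback of N f, so
   d(N(Omega + sigma + rho^* f)) = d(N(Omega + sigma)) + rho^* d(N f).  The
   second term has only dx dx dx components, and those of the first vanish on
   the zero section p = 0, where sigma vanishes identically; evaluating there
   splits the closedness of the sum into that of its two terms. *)

Set Implicit Arguments.
Unset Strict Implicit.
Unset Printing Implicit Defensive.

Section DirectionalDerivatives.
Variable R : realType.

Lemma derive_line_ext m m' (g : 'rV[R]_m -> R) (g' : 'rV[R]_m' -> R) a v a' v' :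
  (forall h : R, g (h *: v + a) = g' (h *: v' + a')) ->
  'D_v g a = 'D_v' g' a' /\ (derivable g a v <-> derivable g' a' v').
Proof.
move=> gg'.
have ga : g a = g' a' by have := gg' 0; rewrite !scale0r !add0r.
have quotients : (fun h : R => h^-1 *: ((g \o shift a) (h *: v) - g a)) =
                 (fun h : R => h^-1 *: ((g' \o shift a') (h *: v') - g' a')).
  by apply/funext => h /=; rewrite gg' ga.
by rewrite /derive /derivable quotients.
Qed.

Lemma derive_zero_on_line m (g : 'rV[R]_m -> R) a v :
  (forall h : R, g (h *: v + a) = 0) -> 'D_v g a = 0.
Proof.
by move=> g0; rewrite (derive_line_ext (g' := cst 0) (a' := a) (v' := v) g0).1 derive_cst.
Qed.

Lemma derivable_scale2 m (N : 'rV[R]_m -> R) (om : form2 R m) a b x v :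
  derivable N x v -> derivable (om a b) x v -> derivable (scale2 N om a b) x v.
Proof. by have -> : scale2 N om a b = N * om a b by []; exact: derivableM. Qed.

Lemma derivable_add2 m (om1 om2 : form2 R m) a b x v :
  derivable (om1 a b) x v -> derivable (om2 a b) x v -> derivable (add2 om1 om2 a b) x v.
Proof. by have -> : add2 om1 om2 a b = om1 a b + om2 a b by []; exact: derivableD. Qed.

Lemma scale2_add2 m (N : 'rV[R]_m -> R) (om1 om2 : form2 R m) :
  scale2 N (add2 om1 om2) = add2 (scale2 N om1) (scale2 N om2).
Proof. by apply/funext => a; apply/funext => b; apply/funext => x; exact: mulrDr. Qed.

Lemma d2_add2 m (om1 om2 : form2 R m) a b c x :
  (forall a b v, derivable (om1 a b) x v) -> (forall a b v, derivable (om2 a b) x v) ->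
  d2 (add2 om1 om2) a b c x = d2 om1 a b c x + d2 om2 a b c x.
Proof.
move=> d1 d2'; rewrite /d2 /partial.
have deriveD2 u v w : 'D_(delta_mx 0 u) (add2 om1 om2 v w) x =
    'D_(delta_mx 0 u) (om1 v w) x + 'D_(delta_mx 0 u) (om2 v w) x.
  by rewrite -deriveD.
by rewrite !deriveD2; ring.
Qed.

End DirectionalDerivatives.

Section CotangentCoordinates.
Variables (R : realType) (n : nat).
Implicit Types (y v : 'rV[R]_(n + n)) (g : 'rV[R]_n -> R)
  (C : 'I_n -> 'I_n -> 'I_n -> 'rV[R]_n -> R).

Lemma xpart_line (h : R) v y : xpart (h *: v + y) = h *: xpart v + xpart y.
Proof. by rewrite /xpart linearD linearZ. Qed.

Lemma xpart_row_mx0 (x : 'rV[R]_n) : xpart (row_mx x 0) = x.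
Proof. exact: row_mxKl. Qed.

Lemma ppart_row_mx0 (x : 'rV[R]_n) : ppart (row_mx x 0) = 0.
Proof. exact: row_mxKr. Qed.

Lemma xpart_delta_lshift (i : 'I_n) :
  xpart (delta_mx 0 (lshift n i) : 'rV[R]_(n + n)) = delta_mx 0 i.
Proof. by apply/matrixP => a b; rewrite !mxE eq_lshift. Qed.

Lemma xpart_delta_rshift (i : 'I_n) :
  xpart (delta_mx 0 (rshift n i) : 'rV[R]_(n + n)) = 0.
Proof. by apply/matrixP => a b; rewrite !mxE eq_lrshift andbF. Qed.

Lemma row_mx0_line_lshift (h : R) (i : 'I_n) (x : 'rV[R]_n) :
  h *: delta_mx 0 (lshift n i) + row_mx x 0 = row_mx (h *: delta_mx 0 i + x) 0.
Proof.
apply/matrixP => a b; rewrite !mxE; case: (fintype.split b) (splitK b) => j <-.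
  by rewrite /= eq_lshift !mxE.
by rewrite /= [rshift _ _ == _]eq_sym eq_lrshift andbF mulr0 add0r.
Qed.

Lemma derive_liftS g y v : 'D_v (liftS g) y = 'D_(xpart v) g (xpart y).
Proof. by apply: (derive_line_ext _).1 => h; rewrite /liftS xpart_line. Qed.

Lemma derivable_liftS g y v :
  differentiable g (xpart y) -> derivable (liftS g) y v.
Proof.
have along_lines (h : R) : liftS g (h *: v + y) = g (h *: xpart v + xpart y).
  by rewrite /liftS xpart_line.
by move=> dg; apply/(derive_line_ext along_lines).2; exact: diff_derivable.
Qed.

Lemma derivable_ppart (k : 'I_n) y v : derivable (fun y => ppart y 0 k) y v.
Proof.
have -> : (fun y => ppart y 0 k) = (fun y => y 0 (rshift n k)).
  by apply/funext => z; rewrite /ppart mxE.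
exact/diff_derivable/differentiable_coord.
Qed.

Lemma partial_pullback (g : form2 R n) a b c y :
  partial (pullback g b c) a y =
  match fintype.split a, fintype.split b, fintype.split c with
  | inl i, inl j, inl k => partial (g j k) i (xpart y)
  | _, _, _ => 0
  end.
Proof.
rewrite /partial /pullback.
case: (fintype.split b) => j; case: (fintype.split c) => k;
  try by case: (fintype.split a) => i; exact: derive_cst.
rewrite (derive_liftS (g j k)).
case: (fintype.split a) (splitK a) => i <- /=.
  by rewrite xpart_delta_lshift.
by rewrite xpart_delta_rshift derive0.
Qed.

Lemma d2_pullback (g : form2 R n) a b c y :
  d2 (pullback g) a b c y =
  match fintype.split a, fintype.split b, fintype.split c with
  | inl i, inl j, inl k => d2 g i j k (xpart y)
  | _, _, _ => 0
  end.
Proof.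
rewrite /d2 !partial_pullback.
by case: (fintype.split a) => i; case: (fintype.split b) => j;
  case: (fintype.split c) => k; rewrite ?addr0.
Qed.

Lemma closed2_pullback (U : set 'rV[R]_n) (g : form2 R n) :
  closed2 U g -> closed2 (@xpart R n @^-1` U) (pullback g).
Proof.
move=> cg y Uy a b c; rewrite d2_pullback.
by case: (fintype.split a) => i; case: (fintype.split b) => j;
  case: (fintype.split c) => k //; exact: cg.
Qed.

Lemma scale2_pullback (N : 'rV[R]_n -> R) (f : form2 R n) :
  scale2 (liftS N) (pullback f) = pullback (scale2 N f).
Proof.
apply/funext => a; apply/funext => b; apply/funext => y.
by rewrite /scale2 /pullback; case: (fintype.split a); case: (fintype.split b) => *; rewrite ?mulr0.
Qed.

Lemma derivable_pullback (g : form2 R n) a b y v :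
  (forall i j, differentiable (g i j) (xpart y)) -> derivable (pullback g a b) y v.
Proof.
move=> dg; rewrite /pullback.
case: (fintype.split a) => i; case: (fintype.split b) => j;
  [exact: derivable_liftS | exact: derivable_cst..].
Qed.

Lemma derivable_Omega a b y v : derivable (@Omega R n a b) y v.
Proof. exact: derivable_cst. Qed.

Lemma derivable_sigma C a b y v :
  (forall k i j, differentiable (C k i j) (xpart y)) -> derivable (sigma C a b) y v.
Proof.
move=> dC; rewrite /sigma.
case: (fintype.split a) => i; case: (fintype.split b) => j; [|exact: derivable_cst..].
have -> : (fun y => \sum_(k < n) C k i j (xpart y) * ppart y 0 k) =
          \sum_(k < n) (liftS (C k i j) * (fun y => ppart y 0 k)).
  by apply/funext => z; rewrite fct_sumE.
apply: derivable_sum => k; apply: derivableM; last exact: derivable_ppart.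
exact: derivable_liftS.
Qed.

Lemma sigma_row_mx0 C a b (x : 'rV[R]_n) :
  sigma C a b (row_mx x 0) = 0.
Proof.
rewrite /sigma ppart_row_mx0.
case: (fintype.split a) => i; case: (fintype.split b) => j //.
by rewrite big1 // => k _; rewrite mxE mulr0.
Qed.

Lemma d2_scale2_Omega_sigma_row_mx0 (N : 'rV[R]_n -> R) C (i j k : 'I_n) (x : 'rV[R]_n) :
  d2 (scale2 (liftS N) (add2 (@Omega R n) (sigma C)))
     (lshift n i) (lshift n j) (lshift n k) (row_mx x 0) = 0.
Proof.
have vanish (i' j' k' : 'I_n) : partial (scale2 (liftS N) (add2 (@Omega R n) (sigma C))
                      (lshift n j') (lshift n k')) (lshift n i') (row_mx x 0) = 0.
  apply: derive_zero_on_line => h.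
  rewrite row_mx0_line_lshift /scale2 /add2 sigma_row_mx0 /Omega.
  by rewrite !(unsplitK (inl _ _)) addr0 mulr0.
by rewrite /d2 !vanish !addr0.
Qed.

Lemma d2_scale2_add2_pullback (N : 'rV[R]_n -> R) (om : form2 R (n + n))
    (f : form2 R n) a b c y :
  differentiable N (xpart y) -> (forall i j, differentiable (f i j) (xpart y)) ->
  (forall a b v, derivable (scale2 (liftS N) om a b) y v) ->
  d2 (scale2 (liftS N) (add2 om (pullback f))) a b c y =
  d2 (scale2 (liftS N) om) a b c y + d2 (pullback (scale2 N f)) a b c y.
Proof.
move=> dN df dom; rewrite scale2_add2 scale2_pullback d2_add2 // => a' b' v.
by apply: derivable_pullback => i j; apply: differentiableM.
Qed.

End CotangentCoordinates.

Theorem proposition5p3 (R : realType) (n : nat) (U : set 'rV[R]_n)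
  (C : 'I_n -> 'I_n -> 'I_n -> 'rV[R]_n -> R) (f : form2 R n)
  (N : 'rV[R]_n -> R) :
  open U ->
  (forall k i j, smooth_on U (C k i j)) ->
  (forall k i j x, U x -> C k i j x = - C k j i x) ->
  (forall i j, smooth_on U (f i j)) ->
  (forall i j x, U x -> f i j x = - f j i x) ->
  smooth_on U N ->
  (forall x, U x -> N x != 0) ->
  let W := (@xpart R n) @^-1` U in
  conformal_factor W (liftS N) (add2 (add2 (@Omega R n) (sigma C)) (pullback f)) <->
  (conformal_factor W (liftS N) (add2 (@Omega R n) (sigma C)) /\
   closed2 U (scale2 N f)).
Proof.
move=> _ sC _ sf _ sN _ W.
have split_d2 y : W y -> forall a b c,
    d2 (scale2 (liftS N) (add2 (add2 (@Omega R n) (sigma C)) (pullback f))) a b c y =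
    d2 (scale2 (liftS N) (add2 (@Omega R n) (sigma C))) a b c y +
    d2 (pullback (scale2 N f)) a b c y.
  move=> Wy a b c.
  have diff g : smooth_on U g -> differentiable g (xpart y) := fun sg => sg [::] _ Wy.
  apply: d2_scale2_add2_pullback => [||a' b' v]; [exact: diff | by move=> *; exact: diff|].
  apply: derivable_scale2; first exact/derivable_liftS/diff.
  apply: derivable_add2; first exact: derivable_Omega.
  by apply: derivable_sigma => *; exact: diff.
split=> [closed_sum | [closed_A closed_Nf] y Wy a b c]; last first.
  by rewrite split_d2 // closed_A // (closed2_pullback closed_Nf) // addr0.
have closed_Nf : closed2 U (scale2 N f).
  move=> x Ux i j k.
  have W0 : W (row_mx x 0) by rewrite /W /preimage /= xpart_row_mx0.
  have := closed_sum _ W0 (lshift n i) (lshift n j) (lshift n k).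
  rewrite split_d2 // d2_scale2_Omega_sigma_row_mx0 add0r d2_pullback.
  by rewrite !(unsplitK (inl _ _)) xpart_row_mx0.
split=> // y Wy a b c; have := closed_sum y Wy a b c.
by rewrite split_d2 // (closed2_pullback closed_Nf) // addr0.
Qed.
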